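(* Let $D$ be a directed graph and $(V(D),\mathcal C)$ its corresponding connectoid. Then the end space of $D$ is homeomorphic to the end space of $(V(D),\mathcal C)$.
   Context: A connectoid is given by a set $S$ and a set $\mathcal F$ of finite subsets of $S$ such that (i) $F\cup F'\in\mathcal F$ whenever $F,F'\in\mathcal F$ and $F\cap F'\neq\emptyset$, and (ii) $\emptyset\in\mathcal F$ and $\{s\}\in\mathcal F$ for every $s\in S$. A set $C\subseteq S$ is connected if for all $x,y\in C$ there is $F\in\mathcal F$ with $F\subseteq C$ and $x,y\in F$. For $S'\subseteq S$, $\mathcal K(S')$ is the set of maximal connected subsets (components) of $S'$. The corresponding connectoid of a directed graph $D$ has $S=V(D)$ and $\mathcal F$ the set of vertex sets of finite strongly connected subgraphs of $D$; its connected sets are exactly the vertex sets of strongly connected subgraphs of $D$. A necklace is a connected set $N$ for which there is a family $(H_n)_{n\in\mathbb N}$ of finite connected sets with $N=\bigcup_n H_n$ and $H_i\cap H_j\neq\emptyset$ iff $|i-j|\le 1$. For finite $X\subseteq S$, the $X$-tail of $N$ is the unique element of $\mathcal K(N\setminus X)$ containing all but finitely many elements of $N$. Two necklaces are equivalent if for every finite $X$ their $X$-tails lie in the same element of $\mathcal K(S\setminus X)$; ends of the connectoid are the equivalence classes; $K(X,\omega)$ is the element of $\mathcal K(S\setminus X)$ containing the $X$-tails of the necklaces of $\omega$; the end space has the topology generated by the sets $\{\omega:K(X,\omega)=K\}$ for finite $X$ and $K\in\mathcal K(S\setminus X)$. Ends of a directed graph $D$ (Bürger–Melcher): a directed ray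 is a ray with all edges oriented away from its first vertex. A directed ray $R$ is solid if for every finite $A\subseteq V(D)$ it has a tail in some strong component of $D-A$. Two solid rays are equivalent if for every finite $A\subseteq V(D)$ they have tails in the same strong component of $D-A$; the equivalence classes are the ends of $D$, and $K(A,\omega)$ is that strong component. The end space of $D$ carries the topology generated by the sets $\{\omega: K(A,\omega)=K\}$ for finite $A\subseteq V(D)$ and strong components $K$ of $D-A$. *)

From Stdlib Require Import List Relations Arith.
Import ListNotations.

Definition finite {T : Type} (X : T -> Prop) : Prop :=
  exists l : list T, forall x, X x -> In x l.
Definition subset {T : Type} (A B : T -> Prop) : Prop := forall x, A x -> B x.
Definition setminus {T : Type} (A X : T -> Prop) : T -> Prop := fun x => A x /\ ~ X x.
Definition compl {T : Type} (X : T -> Prop) : T -> Prop := fun x => ~ X x.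

Inductive gen_open {T : Type} (B : (T -> Prop) -> Prop) : (T -> Prop) -> Prop :=
| go_base : forall U, B U -> gen_open B U
| go_full : gen_open B (fun _ => True)
| go_inter : forall U W, gen_open B U -> gen_open B W ->
    gen_open B (fun x => U x /\ W x)
| go_union : forall Fam : (T -> Prop) -> Prop,
    (forall U, Fam U -> gen_open B U) ->
    gen_open B (fun x => exists U, Fam U /\ U x).

Definition homeomorphic {T1 T2 : Type}
  (B1 : (T1 -> Prop) -> Prop) (B2 : (T2 -> Prop) -> Prop) : Prop :=
  exists (f : T1 -> T2) (g : T2 -> T1),
    (forall x, g (f x) = x) /\ (forall y, f (g y) = y) /\
    (forall U, gen_open B2 U -> gen_open B1 (fun x => U (f x))) /\
    (forall U, gen_open B1 U -> gen_open B2 (fun y => U (g y))).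

Definition is_connectoid {S : Type} (F : (S -> Prop) -> Prop) : Prop :=
  (forall A, F A -> finite A) /\
  (forall A B, F A -> F B -> (exists x, A x /\ B x) -> F (fun x => A x \/ B x)) /\
  F (fun _ => False) /\ (forall s, F (fun x => x = s)).

Definition connected {S : Type} (F : (S -> Prop) -> Prop) (C : S -> Prop) : Prop :=
  forall x y, C x -> C y -> exists A, F A /\ subset A C /\ A x /\ A y.

Definition is_comp {S : Type} (F : (S -> Prop) -> Prop) (S' C : S -> Prop) : Prop :=
  subset C S' /\ connected F C /\
  (forall C', subset C C' -> subset C' S' -> connected F C' -> subset C' C).

Definition necklace {S : Type} (F : (S -> Prop) -> Prop) (N : S -> Prop) : Prop :=
  connected F N /\
  exists H : nat -> S -> Prop,
    (forall n, finite (H n) /\ connected F (H n)) /\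
    (forall x, N x <-> exists n, H n x) /\
    (forall i j, (exists x, H i x /\ H j x) <-> (i <= j + 1 /\ j <= i + 1)).

Definition is_tail {S : Type} (F : (S -> Prop) -> Prop) (X N T : S -> Prop) : Prop :=
  is_comp F (setminus N X) T /\ finite (setminus N T).

Definition tail_in {S : Type} (F : (S -> Prop) -> Prop) (X N K : S -> Prop) : Prop :=
  exists T, is_tail F X N T /\ subset T K.

Definition necklace_equiv {S : Type} (F : (S -> Prop) -> Prop) (N N' : S -> Prop) : Prop :=
  forall X, finite X ->
    exists K, is_comp F (compl X) K /\ tail_in F X N K /\ tail_in F X N' K.

Definition is_cend {S : Type} (F : (S -> Prop) -> Prop) (w : (S -> Prop) -> Prop) : Prop :=
  exists N, necklace F N /\ w = (fun N' => necklace F N' /\ necklace_equiv F N N').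

Definition cend {S : Type} (F : (S -> Prop) -> Prop) : Type := { w | is_cend F w }.

Definition cK {S : Type} (F : (S -> Prop) -> Prop) (X : S -> Prop) (w : cend F)
  (K : S -> Prop) : Prop :=
  is_comp F (compl X) K /\ forall N, proj1_sig w N -> tail_in F X N K.

Definition cend_subbase {S : Type} (F : (S -> Prop) -> Prop) : (cend F -> Prop) -> Prop :=
  fun U => exists X K, finite X /\ is_comp F (compl X) K /\
                      U = (fun w => cK F X w K).

Definition strongly_connected {V : Type} (E : V -> V -> Prop) (C : V -> Prop) : Prop :=
  forall x y, C x -> C y ->
    clos_refl_trans V (fun a b => E a b /\ C a /\ C b) x y.

(* The corresponding connectoid: F = vertex sets of finite strongly connected
   subgraphs of D. *)
Definition digraph_F {V : Type} (E : V -> V -> Prop) : (V -> Prop) -> Prop :=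
  fun C => finite C /\ strongly_connected E C.

Definition strong_comp {V : Type} (E : V -> V -> Prop) (A K : V -> Prop) : Prop :=
  subset K (compl A) /\ strongly_connected E K /\
  (forall K', subset K K' -> subset K' (compl A) -> strongly_connected E K' ->
     subset K' K).

Definition directed_ray {V : Type} (E : V -> V -> Prop) (r : nat -> V) : Prop :=
  (forall m n, r m = r n -> m = n) /\ (forall n, E (r n) (r (S n))).

Definition has_tail_in {V : Type} (r : nat -> V) (K : V -> Prop) : Prop :=
  exists n, forall m, n <= m -> K (r m).

Definition solid {V : Type} (E : V -> V -> Prop) (r : nat -> V) : Prop :=
  directed_ray E r /\
  forall A, finite A -> exists K, strong_comp E A K /\ has_tail_in r K.

Definition ray_equiv {V : Type} (E : V -> V -> Prop) (r r' : nat -> V) : Prop :=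
  forall A, finite A ->
    exists K, strong_comp E A K /\ has_tail_in r K /\ has_tail_in r' K.

Definition is_dend {V : Type} (E : V -> V -> Prop) (w : (nat -> V) -> Prop) : Prop :=
  exists r, solid E r /\ w = (fun r' => solid E r' /\ ray_equiv E r r').

Definition dend {V : Type} (E : V -> V -> Prop) : Type := { w | is_dend E w }.

Definition dK {V : Type} (E : V -> V -> Prop) (A : V -> Prop) (w : dend E)
  (K : V -> Prop) : Prop :=
  strong_comp E A K /\ forall r, proj1_sig w r -> has_tail_in r K.

Definition dend_subbase {V : Type} (E : V -> V -> Prop) : (dend E -> Prop) -> Prop :=
  fun U => exists A K, finite A /\ strong_comp E A K /\
                      U = (fun w => dK E A w K).

From Stdlib Require Import List Relations Arith Lia Classical ClassicalEpsilon
  FunctionalExtensionality PropExtensionality ProofIrrelevance.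
Import ListNotations.

(* An end of either kind selects, for every finite set X, one component of the
   complement of X, and the connected sets of the connectoid of D are exactly the
   strongly connected vertex sets, so both notions of end live on the same
   components. A directed ray that eventually runs inside a necklace has its tails
   in the same components as the necklace. Every necklace contains a directed ray:
   concatenate walks through consecutive beads and erase loops. Every solid ray
   lies eventually in a necklace: cut it into segments, closing each one up by a
   walk back inside the strong component that avoids all earlier beads except the
   previous one. Relating ends with equal components is therefore a bijection
   matching the subbasic sets, i.e. a homeomorphism. *)

Lemma gen_open_ext {T : Type} (B : (T -> Prop) -> Prop) (U W : T -> Prop) :
  (forall x, U x <-> W x) -> gen_open B U -> gen_open B W.
Proof.
  intros HUW HU. replace W with U; auto.
  apply functional_extensionality; intros x. apply propositional_extensionality; auto.
Qed.

Lemma gen_open_preimage {T1 T2 : Type} (B1 : (T1 -> Prop) -> Prop)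
  (B2 : (T2 -> Prop) -> Prop) (f : T1 -> T2) :
  (forall U, B2 U -> gen_open B1 (fun x => U (f x))) ->
  forall U, gen_open B2 U -> gen_open B1 (fun x => U (f x)).
Proof.
  intros Hbase U HU. induction HU as [U HU| |U W _ IHU _ IHW|Fam _ IH].
  - apply Hbase; auto.
  - apply go_full.
  - apply (go_inter _ _ _ IHU IHW).
  - apply (gen_open_ext _ (fun x => exists U', (fun U' => exists U, Fam U /\
      U' = (fun x => U (f x))) U' /\ U' x)).
    + intros x; split.
      * intros [U' [[U [HU ->]] Hx]]; eauto.
      * intros [U [HU Hx]]. exists (fun x => U (f x)); eauto.
    + apply go_union. intros U' [U [HU ->]]. apply IH; auto.
Qed.

Lemma homeomorphic_of_correspondence {T1 T2 : Type} (B1 : (T1 -> Prop) -> Prop)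
  (B2 : (T2 -> Prop) -> Prop) (P : T1 -> T2 -> Prop) :
  (forall x, exists y, P x y) -> (forall y, exists x, P x y) ->
  (forall x y y', P x y -> P x y' -> y = y') ->
  (forall x x' y, P x y -> P x' y -> x = x') ->
  (forall U1, B1 U1 -> exists U2, B2 U2 /\ forall x y, P x y -> (U1 x <-> U2 y)) ->
  (forall U2, B2 U2 -> exists U1, B1 U1 /\ forall x y, P x y -> (U1 x <-> U2 y)) ->
  homeomorphic B1 B2.
Proof.
  intros Hf Hg Pfun Pinj H12 H21.
  destruct (choice _ Hf) as [f Pf]. destruct (choice _ Hg) as [g Pg].
  exists f, g. split; [|split; [|split]].
  - intros x. apply (Pinj _ _ (f x)); auto.
  - intros y. apply (Pfun (g y)); auto.
  - apply gen_open_preimage. intros U2 HU2. destruct (H21 U2 HU2) as [U1 [HU1 Hc]].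
    apply (gen_open_ext _ U1); [intros x; apply Hc, Pf|]. apply go_base; auto.
  - apply gen_open_preimage. intros U1 HU1. destruct (H12 U1 HU1) as [U2 [HU2 Hc]].
    apply (gen_open_ext _ U2); [intros y; symmetry; apply Hc, Pg|]. apply go_base; auto.
Qed.

Lemma finite_subset {T : Type} (A B : T -> Prop) : subset B A -> finite A -> finite B.
Proof. intros HBA [l Hl]; exists l; auto. Qed.

Lemma finite_union {T : Type} (A B : T -> Prop) :
  finite A -> finite B -> finite (fun z => A z \/ B z).
Proof.
  intros [l1 H1] [l2 H2]; exists (l1 ++ l2); intros x [Hx|Hx]; apply in_or_app; auto.
Qed.

Lemma bounded_pred_has_max (P : nat -> Prop) t b : P t -> (forall s, P s -> s < b) ->
  exists s, P s /\ forall s', P s' -> s' <= s.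
Proof.
  intros Pt. induction b as [|b IH]; intros Hb; [specialize (Hb t Pt); lia|].
  destruct (classic (P b)) as [Pb|nPb].
  - exists b. split; auto. intros s' Ps'. specialize (Hb s' Ps'); lia.
  - apply IH. intros s Ps. specialize (Hb s Ps).
    destruct (Nat.eq_dec s b) as [->|]; [contradiction|lia].
Qed.

(* Position [(n, o)] of step [t] in the concatenation of blocks of lengths
   [k 0 + 1, k 1 + 1, ...]: block [n], offset [o <= k n]. *)
Fixpoint concat_index (k : nat -> nat) (t : nat) : nat * nat :=
  match t with
  | 0 => (0, 0)
  | S t' => let (n, o) := concat_index k t' in if o <? k n then (n, S o) else (S n, 0)
  end.

Lemma concat_index_offset_le k t : snd (concat_index k t) <= k (fst (concat_index k t)).
Proof.
  induction t as [|t IH]; simpl; [lia|]. destruct (concat_index k t) as [n o]; simpl in *.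
  destruct (o <? k n) eqn:Ho; simpl; [apply Nat.ltb_lt in Ho|]; lia.
Qed.

Lemma concat_index_mono k t t' : t <= t' -> fst (concat_index k t) <= fst (concat_index k t').
Proof.
  intros Htt'. induction Htt' as [|t' _ IH]; [lia|]. simpl.
  destruct (concat_index k t') as [n o]; simpl in *. destruct (o <? k n); simpl; lia.
Qed.

Lemma concat_index_reach k n : exists t, concat_index k t = (n, 0).
Proof.
  induction n as [|n [t Ht]]; [exists 0; auto|].
  assert (Hrun : forall d, d <= k n -> concat_index k (t + d) = (n, d)).
  { induction d as [|d IH]; intros Hd; [rewrite Nat.add_0_r; auto|].
    rewrite Nat.add_succ_r; simpl. rewrite IH by lia.
    destruct (d <? k n) eqn:Hdk; auto. apply Nat.ltb_ge in Hdk; lia. }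
  exists (S (t + k n)). simpl. rewrite Hrun by lia. rewrite Nat.ltb_irrefl; auto.
Qed.

(** * Components and necklaces of a connectoid *)

Section Connectoid.

Context {T : Type} {F : (T -> Prop) -> Prop}.
Hypothesis F_union : forall A B, F A -> F B -> (exists x, A x /\ B x) ->
  F (fun x => A x \/ B x).
Hypothesis F_singleton : forall s : T, F (fun x => x = s).

Lemma connected_ext (A B : T -> Prop) :
  (forall z, A z <-> B z) -> connected F A -> connected F B.
Proof.
  intros HAB HA x y Bx By. destruct (HA x y) as [P [FP [HPA [Px Py]]]]; try apply HAB; auto.
  exists P; repeat split; auto. intros z Pz; apply HAB, HPA, Pz.
Qed.

Lemma connected_of_hub (C : T -> Prop) c : C c ->
  (forall z, C z -> exists P, F P /\ subset P C /\ P z /\ P c) -> connected F C.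
Proof.
  intros Cc Hhub x y Cx Cy.
  destruct (Hhub x Cx) as [P [FP [HPC [Px Pc]]]].
  destruct (Hhub y Cy) as [Q [FQ [HQC [Qy Qc]]]].
  exists (fun z => P z \/ Q z). split; [apply F_union; eauto|].
  split; [intros z [Hz|Hz]; auto|]. auto.
Qed.

Lemma connected_singleton x : connected F (fun z => z = x).
Proof.
  intros a b -> ->. exists (fun z => z = x). split; auto. split; [intros z Hz; auto|auto].
Qed.

Lemma connected_union (A B : T -> Prop) : connected F A -> connected F B ->
  (exists x, A x /\ B x) -> connected F (fun z => A z \/ B z).
Proof.
  intros HA HB [c [Ac Bc]]. apply (connected_of_hub _ c); [auto|].
  intros z [Az|Bz].
  - destruct (HA z c Az Ac) as [P [FP [HPA HP]]].
    exists P; split; auto; split; auto. intros u Pu; left; auto.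
  - destruct (HB z c Bz Bc) as [P [FP [HPB HP]]].
    exists P; split; auto; split; auto. intros u Pu; right; auto.
Qed.

Lemma is_comp_absorb (S' K C : T -> Prop) : is_comp F S' K -> connected F C ->
  subset C S' -> (exists x, C x /\ K x) -> subset C K.
Proof.
  intros [HKS [HK Hmax]] HC HCS [x [Cx Kx]] z Cz.
  apply (Hmax (fun u => K u \/ C u)); auto.
  - intros u Ku; auto.
  - intros u [Hu|Hu]; auto.
  - apply connected_union; eauto.
Qed.

Lemma is_comp_incl (S' K1 K2 : T -> Prop) : is_comp F S' K1 -> is_comp F S' K2 ->
  (exists x, K1 x /\ K2 x) -> subset K1 K2.
Proof. intros H1 H2. apply (is_comp_absorb S'); auto; apply H1. Qed.

Lemma is_comp_exists (S' : T -> Prop) x : S' x -> exists K, is_comp F S' K /\ K x.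
Proof.
  intros S'x. exists (fun y => exists C, connected F C /\ subset C S' /\ C x /\ C y).
  assert (Kx : exists C, connected F C /\ subset C S' /\ C x /\ C x).
  { exists (fun z => z = x). split; [apply connected_singleton|].
    split; [intros u ->; auto|auto]. }
  split; [split; [|split]|auto].
  - intros y [C [_ [HCS [_ Cy]]]]; auto.
  - apply (connected_of_hub _ x); auto. intros z [C [HC [HCS [Cx Cz]]]].
    destruct (HC z x Cz Cx) as [P [FP [HPC HP]]].
    exists P. split; auto. split; auto. intros u Pu. exists C; auto.
  - intros C' HKC' HC'S HC' y C'y. exists C'. repeat split; auto.
Qed.

Definition beads (H : nat -> T -> Prop) : Prop :=
  (forall n, finite (H n) /\ connected F (H n)) /\
  (forall i j, (exists x, H i x /\ H j x) <-> (i <= j + 1 /\ j <= i + 1)).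

Definition beads_between (H : nat -> T -> Prop) i j : T -> Prop :=
  fun y => exists k, i <= k <= j /\ H k y.

Lemma necklace_beads N : necklace F N ->
  exists H, beads H /\ forall x, N x <-> exists n, H n x.
Proof. intros [_ [H [HH [HN Hmeet]]]]. exists H; split; [split|]; auto. Qed.

Lemma beads_nonempty H : beads H -> forall n, exists x, H n x.
Proof. intros [_ Hmeet] n. destruct (proj2 (Hmeet n n)) as [x [Hx _]]; [lia|eauto]. Qed.

Lemma beads_meet_succ H : beads H -> forall n, exists x, H n x /\ H (S n) x.
Proof. intros [_ Hmeet] n. apply Hmeet; lia. Qed.

Lemma beads_index_bound H : beads H ->
  forall l : list T, exists J, forall x j, In x l -> H j x -> j <= J.
Proof.
  intros [_ Hmeet] l. induction l as [|a l [J HJ]].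
  - exists 0; intros x j [].
  - destruct (classic (exists j0, H j0 a)) as [[j0 Hj0]|Hno].
    + exists (max J (j0 + 1)). intros x j [<-|Hx] Hj.
      * assert (j <= j0 + 1 /\ j0 <= j + 1) by (apply Hmeet; eauto). lia.
      * specialize (HJ x j Hx Hj). lia.
    + exists J. intros x j [<-|Hx] Hj; [exfalso; eauto|eauto].
Qed.

Lemma beads_between_finite_connected H i j : beads H -> i <= j ->
  finite (beads_between H i j) /\ connected F (beads_between H i j).
Proof.
  intros HH Hij. induction Hij as [|j Hij [IHfin IHconn]].
  - assert (Hi : forall y, H i y <-> beads_between H i i y).
    { intros y; split; [exists i; split; auto|intros [k [Hk Hy]]; replace i with k by lia; auto]. }
    split.
    + apply (finite_subset (H i)); [intros y; apply Hi|apply HH].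
    + apply (connected_ext (H i)); [apply Hi|apply HH].
  - assert (Hsplit : forall z, beads_between H i j z \/ H (S j) z <-> beads_between H i (S j) z).
    { intros z; split.
      - intros [[k [Hk Hz]]|Hz]; [exists k|exists (S j)]; split; auto; lia.
      - intros [k [Hk Hz]]. destruct (Nat.eq_dec k (S j)) as [->|Hne]; auto.
        left; exists k; split; auto; lia. }
    split.
    + apply (finite_subset _ _ (fun z => proj2 (Hsplit z))).
      apply finite_union; [exact IHfin|apply HH].
    + apply (connected_ext _ _ Hsplit). apply connected_union; auto; [apply HH|].
      destruct (beads_meet_succ H HH j) as [x [Hx Hx']].
      exists x; split; auto. exists j; split; auto; lia.
Qed.

Lemma necklace_of_beads H : beads H -> necklace F (fun x => exists n, H n x).
Proof.
  intros HH. split.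
  - intros x y [i Hi] [j Hj].
    destruct (proj2 (beads_between_finite_connected H 0 (i + j) HH (Nat.le_0_l _)) x y)
      as [P [FP [HP Pxy]]]; [exists i; split; auto; lia|exists j; split; auto; lia|].
    exists P. split; auto. split; auto. intros z Pz. destruct (HP z Pz) as [k [_ Hk]]; eauto.
  - exists H. split; [apply HH|]. split; [intros; reflexivity|apply HH].
Qed.

Lemma necklace_escapes_finite N Y : necklace F N -> finite Y -> exists x, N x /\ ~ Y x.
Proof.
  intros HN [l Hl]. destruct (necklace_beads N HN) as [H [HH HNH]].
  destruct (beads_index_bound H HH l) as [J HJ].
  destruct (beads_nonempty H HH (S J)) as [x Hx]. exists x. split; [apply HNH; eauto|].
  intros Yx. specialize (HJ x (S J) (Hl _ Yx) Hx). lia.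
Qed.

(* Beyond the last bead meeting [X], the beads form a connected set avoiding [X];
   it lies in a single component, which therefore misses only finitely many beads. *)
Lemma necklace_tail_exists N X : necklace F N -> finite X -> exists Tl, is_tail F X N Tl.
Proof.
  intros HN [lX HX]. destruct (necklace_beads N HN) as [H [HH HNH]].
  destruct (beads_index_bound H HH lX) as [J HJ].
  assert (Hfar : forall k u, J < k -> H k u -> setminus N X u).
  { intros k u Hk Hu. split; [apply HNH; eauto|].
    intros Xu. specialize (HJ u k (HX _ Xu) Hu). lia. }
  destruct (beads_nonempty H HH (S J)) as [x0 Hx0].
  destruct (is_comp_exists _ x0 (Hfar (S J) x0 (Nat.lt_succ_diag_r _) Hx0)) as [K [HK Kx0]].
  exists K. split; auto.
  destruct (proj1 (beads_between_finite_connected H 0 J HH (Nat.le_0_l _))) as [l Hl].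
  exists l. intros y [Ny nKy]. apply Hl. destruct (proj1 (HNH y) Ny) as [j Hj].
  destruct (le_lt_dec j J) as [Hle|Hlt]; [exists j; split; auto; lia|].
  exfalso; apply nKy.
  apply (is_comp_absorb (setminus N X) K (beads_between H (S J) j) HK).
  - apply beads_between_finite_connected; auto.
  - intros u [k [Hk Hu]]. apply (Hfar k); auto; lia.
  - exists x0. split; auto. exists (S J); split; auto; lia.
  - exists j; split; auto; lia.
Qed.

Lemma tail_in_weaken X N (K1 K2 : T -> Prop) :
  tail_in F X N K1 -> subset K1 K2 -> tail_in F X N K2.
Proof. intros [Tl [HT HTK]] HK; exists Tl; split; auto; intros x Hx; auto. Qed.

Lemma tail_in_meet N X K1 K2 : necklace F N -> tail_in F X N K1 -> tail_in F X N K2 ->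
  exists x, K1 x /\ K2 x.
Proof.
  intros HN [T1 [[_ [l1 F1]] S1]] [T2 [[_ [l2 F2]] S2]].
  destruct (necklace_escapes_finite N (fun x => In x (l1 ++ l2)) HN) as [x [Nx Hx]];
    [exists (l1 ++ l2); auto|].
  exists x. split.
  - apply S1. apply NNPP; intros nT. apply Hx, in_or_app; left; apply F1; split; auto.
  - apply S2. apply NNPP; intros nT. apply Hx, in_or_app; right; apply F2; split; auto.
Qed.

Lemma necklace_tail_in_comp N X : necklace F N -> finite X ->
  exists K, is_comp F (compl X) K /\ tail_in F X N K.
Proof.
  intros HN HX. destruct (necklace_tail_exists N X HN HX) as [Tl [HT [lT HlT]]].
  destruct (necklace_escapes_finite N (fun x => In x lT) HN) as [x [Nx Hx]]; [exists lT; auto|].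
  assert (Tx : Tl x) by (apply NNPP; intros nT; apply Hx, HlT; split; auto).
  destruct HT as [HTS [HTconn HTmax]].
  destruct (is_comp_exists (compl X) x) as [K [HK Kx]]; [apply (HTS x Tx)|].
  exists K. split; auto. exists Tl. split; [split; [split; auto|exists lT; auto]|].
  apply (is_comp_absorb (compl X) K Tl HK HTconn); [intros u Hu; apply (HTS u Hu)|eauto].
Qed.

Lemma necklace_equiv_refl N : necklace F N -> necklace_equiv F N N.
Proof. intros HN X HX. destruct (necklace_tail_in_comp N X HN HX) as [K [HK HNK]]; eauto. Qed.

Lemma necklace_equiv_sym N1 N2 : necklace_equiv F N1 N2 -> necklace_equiv F N2 N1.
Proof. intros H12 X HX. destruct (H12 X HX) as [K [HK [H1 H2]]]; eauto. Qed.

Lemma necklace_equiv_trans N1 N2 N3 : necklace F N2 ->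
  necklace_equiv F N1 N2 -> necklace_equiv F N2 N3 -> necklace_equiv F N1 N3.
Proof.
  intros HN2 H12 H23 X HX. destruct (H12 X HX) as [K1 [HK1 [T1 T2]]].
  destruct (H23 X HX) as [K2 [HK2 [T2' T3]]].
  exists K1. split; auto. split; auto. apply (tail_in_weaken X N3 K2); auto.
  apply (is_comp_incl (compl X)); auto. apply (tail_in_meet N2 X); auto.
Qed.

Definition necklace_class (N : T -> Prop) : (T -> Prop) -> Prop :=
  fun N' => necklace F N' /\ necklace_equiv F N N'.

Lemma necklace_class_eq N1 N2 : necklace F N1 -> necklace F N2 ->
  necklace_equiv F N1 N2 -> necklace_class N1 = necklace_class N2.
Proof.
  intros HN1 HN2 H12. apply functional_extensionality; intros N'.
  apply propositional_extensionality. split; intros [HN' H]; split; auto.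
  - apply (necklace_equiv_trans N2 N1 N'); auto. apply necklace_equiv_sym; auto.
  - apply (necklace_equiv_trans N1 N2 N'); auto.
Qed.

Lemma cK_representative (w : cend F) N X K : finite X -> necklace F N ->
  proj1_sig w = necklace_class N ->
  (cK F X w K <-> is_comp F (compl X) K /\ tail_in F X N K).
Proof.
  intros HX HN Hw. unfold cK. rewrite Hw. split.
  - intros [HK Htail]. split; auto. apply Htail. split; auto. apply necklace_equiv_refl; auto.
  - intros [HK Htail]. split; auto. intros N' [HN' HNN'].
    destruct (HNN' X HX) as [K' [HK' [T1 T2]]].
    apply (tail_in_weaken X N' K'); auto. apply (is_comp_incl (compl X)); auto.
    apply (tail_in_meet N X); auto.
Qed.

Lemma cK_exists (w : cend F) X : finite X -> exists K, cK F X w K.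
Proof.
  intros HX. destruct w as [c [N [HN Hc]]].
  destruct (necklace_tail_in_comp N X HN HX) as [K HK].
  exists K. apply (cK_representative (exist _ c (ex_intro _ N (conj HN Hc))) N); auto.
Qed.

Lemma cend_eq (w1 w2 : cend F) :
  (forall X, finite X -> exists K, cK F X w1 K /\ cK F X w2 K) -> w1 = w2.
Proof.
  intros Hcommon. destruct w1 as [c1 p1], w2 as [c2 p2].
  assert (c1 = c2) as <-; [|f_equal; apply proof_irrelevance].
  pose proof p1 as [N1 [HN1 Hc1]]. pose proof p2 as [N2 [HN2 Hc2]].
  rewrite Hc1, Hc2. apply necklace_class_eq; auto. intros X HX.
  destruct (Hcommon X HX) as [K [K1 K2]].
  apply (cK_representative (exist _ c1 p1) N1 X K HX HN1 Hc1) in K1.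
  apply (cK_representative (exist _ c2 p2) N2 X K HX HN2 Hc2) in K2.
  exists K. split; [apply K1|]. split; [apply K1|apply K2].
Qed.

End Connectoid.

Arguments beads {T} F H.
Arguments necklace_class {T} F N.

(** * Strong components of a digraph *)

Section Digraph.

Variables (V : Type) (E : V -> V -> Prop).

Local Notation DF := (digraph_F E).

Definition reach_in (C : V -> Prop) : V -> V -> Prop :=
  clos_refl_trans V (fun a b => E a b /\ C a /\ C b).

Lemma reach_in_mono (C C' : V -> Prop) x y : subset C C' -> reach_in C x y -> reach_in C' x y.
Proof.
  intros HCC' Hxy. induction Hxy as [x y [Exy [Cx Cy]]| |].
  - apply rt_step; repeat split; auto.
  - apply rt_refl.
  - eapply rt_trans; eauto.
Qed.

Lemma strongly_connected_of_hub (C : V -> Prop) h : C h ->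
  (forall z, C z -> reach_in C h z /\ reach_in C z h) -> strongly_connected E C.
Proof.
  intros Ch Hhub x y Cx Cy. apply (rt_trans _ _ _ h); [apply Hhub|apply Hhub]; auto.
Qed.

Lemma strongly_connected_union (A B : V -> Prop) :
  strongly_connected E A -> strongly_connected E B -> (exists x, A x /\ B x) ->
  strongly_connected E (fun z => A z \/ B z).
Proof.
  intros HA HB [h [Ah Bh]]. apply (strongly_connected_of_hub _ h); [left; auto|].
  intros z [Az|Bz]; split.
  1, 2: apply (reach_in_mono A); [intros u; auto|apply HA; auto].
  1, 2: apply (reach_in_mono B); [intros u; auto|apply HB; auto].
Qed.

Lemma walk_support (C : V -> Prop) x y : reach_in C x y -> C y ->
  exists l, (forall z, In z l -> C z) /\ In x l /\ In y l /\
    forall z, In z l -> reach_in (fun u => In u l) x z /\ reach_in (fun u => In u l) z y.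
Proof.
  intros Hxy Cy. apply clos_rt_rt1n in Hxy.
  induction Hxy as [x|x x' y [Exx' [Cx Cx']] _ IH].
  - exists [x]. split; [intros z [<-|[]]; auto|]. split; [left; auto|]. split; [left; auto|].
    intros z [<-|[]]; split; apply rt_refl.
  - destruct (IH Cy) as [l [HlC [Hx'l [Hyl Hl]]]].
    assert (Hwiden : forall a b, reach_in (fun u => In u l) a b ->
      reach_in (fun u => In u (x :: l)) a b).
    { intros a b; apply reach_in_mono. intros u Hu; right; auto. }
    assert (Hxx' : reach_in (fun u => In u (x :: l)) x x').
    { apply rt_step. split; auto. split; [left|right]; auto. }
    exists (x :: l). split; [intros z [<-|Hz]; auto|]. split; [left; auto|].
    split; [right; auto|]. intros z [<-|Hz].
    + split; [apply rt_refl|]. apply (rt_trans _ _ _ x'); auto. apply Hwiden, Hl; auto.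
    + split; [apply (rt_trans _ _ _ x'); auto|]; apply Hwiden, Hl; auto.
Qed.

(* The finite strongly connected set witnessing [x] and [y] is the union of the
   supports of a walk from [x] to [y] and one back. *)
Lemma connected_digraph_F (C : V -> Prop) : connected DF C <-> strongly_connected E C.
Proof.
  split.
  - intros HC x y Cx Cy. destruct (HC x y Cx Cy) as [A [[_ HA] [HAC [Ax Ay]]]].
    apply (reach_in_mono A); auto. apply HA; auto.
  - intros HC x y Cx Cy.
    destruct (walk_support C x y (HC x y Cx Cy) Cy) as [l1 [Hl1C [Hxl1 [Hyl1 Hl1]]]].
    destruct (walk_support C y x (HC y x Cy Cx) Cx) as [l2 [Hl2C [Hyl2 [Hxl2 Hl2]]]].
    exists (fun z => In z (l1 ++ l2)).
    assert (Hw1 : forall a b, reach_in (fun u => In u l1) a b ->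
      reach_in (fun u => In u (l1 ++ l2)) a b).
    { intros a b; apply reach_in_mono; intros u Hu; apply in_or_app; auto. }
    assert (Hw2 : forall a b, reach_in (fun u => In u l2) a b ->
      reach_in (fun u => In u (l1 ++ l2)) a b).
    { intros a b; apply reach_in_mono; intros u Hu; apply in_or_app; auto. }
    repeat split.
    + exists (l1 ++ l2); auto.
    + apply (strongly_connected_of_hub _ x); [apply in_or_app; auto|].
      intros z Hz. apply in_app_or in Hz as [Hz|Hz].
      * split; [apply Hw1, Hl1; auto|].
        apply (rt_trans _ _ _ y); [apply Hw1, Hl1|apply Hw2, Hl2]; auto.
      * split; [|apply Hw2, Hl2; auto].
        apply (rt_trans _ _ _ y); [apply Hw1, Hl1|apply Hw2, Hl2]; auto.
    + intros z Hz. apply in_app_or in Hz as [Hz|Hz]; auto.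
    + apply in_or_app; auto.
    + apply in_or_app; auto.
Qed.

Lemma digraph_F_union (A B : V -> Prop) : DF A -> DF B -> (exists x, A x /\ B x) ->
  DF (fun x => A x \/ B x).
Proof.
  intros [HAfin HA] [HBfin HB] HAB. split; [apply finite_union|apply strongly_connected_union]; auto.
Qed.

Lemma digraph_F_singleton (s : V) : DF (fun x => x = s).
Proof. split; [exists [s]; intros x ->; left; auto|]. intros a b -> ->; apply rt_refl. Qed.

Lemma strong_comp_is_comp (A K : V -> Prop) : strong_comp E A K <-> is_comp DF (compl A) K.
Proof.
  unfold strong_comp, is_comp. rewrite connected_digraph_F.
  split; intros [HKA [HK Hmax]]; split; auto; split; auto;
    intros C' HKC' HC'A HC'; apply Hmax; auto; apply connected_digraph_F; auto.
Qed.

Lemma strong_comp_incl (A K1 K2 : V -> Prop) : strong_comp E A K1 -> strong_comp E A K2 ->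
  (exists x, K1 x /\ K2 x) -> subset K1 K2.
Proof.
  rewrite !strong_comp_is_comp. apply (is_comp_incl digraph_F_union).
Qed.

(** * Ends of a digraph *)

Lemma has_tail_in_meet (r : nat -> V) K1 K2 : has_tail_in r K1 -> has_tail_in r K2 ->
  exists x, K1 x /\ K2 x.
Proof. intros [n1 H1] [n2 H2]. exists (r (n1 + n2)). split; [apply H1|apply H2]; lia. Qed.

Lemma has_tail_in_weaken (r : nat -> V) (K1 K2 : V -> Prop) :
  has_tail_in r K1 -> subset K1 K2 -> has_tail_in r K2.
Proof. intros [n Hn] HK; exists n; auto. Qed.

Lemma ray_equiv_refl r : solid E r -> ray_equiv E r r.
Proof. intros [_ Hsolid] A HA. destruct (Hsolid A HA) as [K [HK Hr]]; eauto. Qed.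

Lemma ray_equiv_sym r1 r2 : ray_equiv E r1 r2 -> ray_equiv E r2 r1.
Proof. intros H12 A HA. destruct (H12 A HA) as [K [HK [H1 H2]]]; eauto. Qed.

Lemma ray_equiv_trans r1 r2 r3 : ray_equiv E r1 r2 -> ray_equiv E r2 r3 -> ray_equiv E r1 r3.
Proof.
  intros H12 H23 A HA. destruct (H12 A HA) as [K1 [HK1 [T1 T2]]].
  destruct (H23 A HA) as [K2 [HK2 [T2' T3]]].
  exists K1. split; auto. split; auto. apply (has_tail_in_weaken r3 K2); auto.
  apply (strong_comp_incl A); auto. apply (has_tail_in_meet r2); auto.
Qed.

Definition ray_class (r : nat -> V) : (nat -> V) -> Prop :=
  fun r' => solid E r' /\ ray_equiv E r r'.

Lemma ray_class_eq r1 r2 : ray_equiv E r1 r2 -> ray_class r1 = ray_class r2.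
Proof.
  intros H12. apply functional_extensionality; intros r'.
  apply propositional_extensionality. split; intros [Hr' H]; split; auto.
  - apply (ray_equiv_trans r2 r1 r'); auto. apply ray_equiv_sym; auto.
  - apply (ray_equiv_trans r1 r2 r'); auto.
Qed.

Lemma dK_representative (w : dend E) r A K : finite A -> solid E r ->
  proj1_sig w = ray_class r -> (dK E A w K <-> strong_comp E A K /\ has_tail_in r K).
Proof.
  intros HA Hr Hw. unfold dK. rewrite Hw. split.
  - intros [HK Htail]. split; auto. apply Htail. split; auto. apply ray_equiv_refl; auto.
  - intros [HK Htail]. split; auto. intros r' [Hr' Hrr'].
    destruct (Hrr' A HA) as [K' [HK' [T1 T2]]].
    apply (has_tail_in_weaken r' K'); auto. apply (strong_comp_incl A); auto.
    apply (has_tail_in_meet r); auto.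
Qed.

Lemma dK_exists (w : dend E) A : finite A -> exists K, dK E A w K.
Proof.
  intros HA. destruct w as [c [r [Hr Hc]]].
  destruct (proj2 Hr A HA) as [K HK].
  exists K. apply (dK_representative (exist _ c (ex_intro _ r (conj Hr Hc))) r); auto.
Qed.

Lemma dend_eq (w1 w2 : dend E) :
  (forall A, finite A -> exists K, dK E A w1 K /\ dK E A w2 K) -> w1 = w2.
Proof.
  intros Hcommon. destruct w1 as [c1 p1], w2 as [c2 p2].
  assert (c1 = c2) as <-; [|f_equal; apply proof_irrelevance].
  pose proof p1 as [r1 [Hr1 Hc1]]. pose proof p2 as [r2 [Hr2 Hc2]].
  rewrite Hc1, Hc2. apply ray_class_eq. intros A HA.
  destruct (Hcommon A HA) as [K [K1 K2]].
  apply (dK_representative (exist _ c1 p1) r1 A K HA Hr1 Hc1) in K1.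
  apply (dK_representative (exist _ c2 p2) r2 A K HA Hr2 Hc2) in K2.
  exists K. split; [apply K1|]. split; [apply K1|apply K2].
Qed.

(** * Rays inside necklaces *)

Lemma ray_eventually_avoids r : directed_ray E r ->
  forall l : list V, exists n, forall m, n <= m -> ~ In (r m) l.
Proof.
  intros [Hinj _] l. induction l as [|a l [n Hn]].
  - exists 0; intros m _ [].
  - destruct (classic (exists k, r k = a)) as [[k <-]|Hno].
    + exists (max n (S k)). intros m Hm [Hmk|Hl].
      * apply Hinj in Hmk. lia.
      * apply (Hn m); auto; lia.
    + exists n. intros m Hm [Ha|Hl]; [apply Hno; eauto|apply (Hn m); auto].
Qed.

(* Past the finitely many vertices of [X] and of [N] outside its [X]-tail, the
   ray runs inside that tail. *)
Lemma ray_in_necklace_comp r N X : directed_ray E r -> necklace DF N ->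
  (exists n0, forall m, n0 <= m -> N (r m)) -> finite X ->
  exists K, strong_comp E X K /\ has_tail_in r K /\ tail_in DF X N K.
Proof.
  intros Hr HN [n0 Hn0] HX.
  destruct (necklace_tail_exists digraph_F_union digraph_F_singleton N X HN HX)
    as [Tl [HTl [lT HlT]]].
  destruct HX as [lX HlX]. destruct (ray_eventually_avoids r Hr (lT ++ lX)) as [n1 Hn1].
  assert (Hin : forall m, max n0 n1 <= m -> Tl (r m) /\ ~ X (r m)).
  { intros m Hm. split.
    - apply NNPP; intros nT. apply (Hn1 m); [lia|]. apply in_or_app; left.
      apply HlT. split; auto. apply Hn0; lia.
    - intros Xr. apply (Hn1 m); [lia|]. apply in_or_app; right; auto. }
  destruct (Hin (max n0 n1) (le_n _)) as [TlM XM].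
  destruct (is_comp_exists digraph_F_union digraph_F_singleton (compl X) _ XM)
    as [K [HK KM]].
  destruct HTl as [HTlS [HTlconn HTlmax]].
  assert (HTlK : subset Tl K).
  { apply (is_comp_absorb digraph_F_union (compl X) K Tl HK HTlconn).
    - intros u Hu; apply (HTlS u Hu).
    - exists (r (max n0 n1)); auto. }
  exists K. split; [apply strong_comp_is_comp; auto|]. split.
  - exists (max n0 n1); intros m Hm; apply HTlK, Hin; auto.
  - exists Tl. split; [split; [split; auto|exists lT; auto]|auto].
Qed.

Lemma ray_in_necklace_solid r N : directed_ray E r -> necklace DF N ->
  (exists n0, forall m, n0 <= m -> N (r m)) -> solid E r.
Proof.
  intros Hr HN HrN. split; auto. intros A HA.
  destruct (ray_in_necklace_comp r N A Hr HN HrN HA) as [K [HK [HrK _]]]; eauto.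
Qed.

Lemma ray_in_necklace_comp_iff r N X K : directed_ray E r -> necklace DF N ->
  (exists n0, forall m, n0 <= m -> N (r m)) -> finite X ->
  (strong_comp E X K /\ has_tail_in r K <-> is_comp DF (compl X) K /\ tail_in DF X N K).
Proof.
  intros Hr HN HrN HX. destruct (ray_in_necklace_comp r N X Hr HN HrN HX) as [K0 [HK0 [HrK0 HNK0]]].
  split.
  - intros [HK HrK]. split; [apply strong_comp_is_comp; auto|].
    apply (tail_in_weaken X N K0); auto. apply (strong_comp_incl X); auto.
    apply (has_tail_in_meet r); auto.
  - intros [HK HNK]. split; [apply strong_comp_is_comp; auto|].
    apply (has_tail_in_weaken r K0); auto.
    apply strong_comp_is_comp in HK0. apply (is_comp_incl digraph_F_union (compl X)); auto.
    apply (tail_in_meet (F := DF) N X); auto.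
Qed.

(** * A directed ray in every necklace *)

Definition walk_in (C : V -> Prop) (x y : V) (k : nat) (p : nat -> V) : Prop :=
  p 0 = x /\ p k = y /\ (forall i, i < k -> E (p i) (p (S i))) /\ (forall i, i <= k -> C (p i)).

Lemma walk_of_reach (C : V -> Prop) x y : reach_in C x y -> C y ->
  exists k p, walk_in C x y k p.
Proof.
  intros Hxy Cy. apply clos_rt_rt1n in Hxy.
  induction Hxy as [x|x x' y [Exx' [Cx Cx']] _ IH].
  - exists 0, (fun _ => x). repeat split; auto. intros; lia.
  - destruct (IH Cy) as [k [p [Hp0 [Hpk [HpE HpC]]]]].
    exists (S k), (fun i => match i with 0 => x | S i => p i end).
    repeat split; auto.
    + intros [|i] Hi; [rewrite Hp0; auto|apply HpE; lia].
    + intros [|i] Hi; auto. apply HpC; lia.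
Qed.

Lemma last_visit (w : nat -> V) : (forall v, exists t0, forall t, t0 <= t -> w t <> v) ->
  forall t, exists s, t <= s /\ w s = w t /\ forall s', s < s' -> w s' <> w t.
Proof.
  intros Hfin t. destruct (Hfin (w t)) as [t0 Ht0].
  destruct (bounded_pred_has_max (fun s => t <= s /\ w s = w t) t t0) as [s [[Hts Hs] Hmax]].
  - split; auto.
  - intros s [_ Hs]. destruct (le_lt_dec t0 s) as [Hle|]; auto. exfalso; apply (Ht0 s Hle Hs).
  - exists s. repeat split; auto. intros s' Hss' Hs'.
    specialize (Hmax s' (conj (Nat.le_trans _ _ _ Hts (Nat.lt_le_incl _ _ Hss')) Hs')). lia.
Qed.

(* Jump from each vertex to just after its last visit. *)
Lemma loop_erasure (w : nat -> V) : (forall t, E (w t) (w (S t)) \/ w t = w (S t)) ->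
  (forall v, exists t0, forall t, t0 <= t -> w t <> v) ->
  exists r, directed_ray E r /\ forall n, exists t, r n = w t.
Proof.
  intros Hstep Hfin. destruct (choice _ (last_visit w Hfin)) as [last_at Hlast].
  set (pick := fun n => Nat.iter n (fun t => last_at (S t)) (last_at 0)).
  assert (Hafter : forall n s, pick n < s -> w s <> w (pick n)).
  { assert (H : forall t s, last_at t < s -> w s <> w (last_at t)).
    { intros t s Hs. destruct (Hlast t) as [_ [-> Hnot]]. apply Hnot; auto. }
    intros [|n] s; apply H. }
  assert (Hinc : forall n, S (pick n) <= pick (S n)) by (intros n; apply (proj1 (Hlast (S (pick n))))).
  assert (Hmono : forall i j, i < j -> pick i < pick j).
  { intros i j Hij. induction Hij as [|j _ IH]; [apply Hinc|pose proof (Hinc j); lia]. }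
  exists (fun n => w (pick n)). split; [split|intros n; eauto].
  - intros i j Hij. destruct (lt_eq_lt_dec i j) as [[Hlt|]|Hlt]; auto; exfalso.
    + apply (Hafter i (pick j)); auto.
    + apply (Hafter j (pick i)); auto.
  - intros n. replace (w (pick (S n))) with (w (S (pick n))) by (symmetry; apply Hlast).
    destruct (Hstep (pick n)) as [HE|Heq]; auto. exfalso; apply (Hafter n (S (pick n))); auto.
Qed.

(* Concatenate walks inside [H (S n)] between chosen points of consecutive
   intersections; a vertex of [H j] is not visited once the walk has entered
   the beads beyond [H (S j)]. *)
Lemma necklace_contains_ray N : necklace DF N ->
  exists r, directed_ray E r /\ forall n, N (r n).
Proof.
  intros HN. destruct (necklace_beads N HN) as [H [HH HNH]].
  destruct (choice _ (beads_meet_succ H HH)) as [x Hx].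
  assert (Hwalks : forall n, exists kp : nat * (nat -> V),
    walk_in (H (S n)) (x n) (x (S n)) (fst kp) (snd kp)).
  { intros n. destruct (walk_of_reach (H (S n)) (x n) (x (S n))) as [k [p Hp]].
    - apply connected_digraph_F; [apply HH|apply Hx|apply Hx].
    - apply Hx.
    - exists (k, p); auto. }
  destruct (choice _ Hwalks) as [kp Hkp].
  set (k := fun n => fst (kp n)).
  set (w := fun t => snd (kp (fst (concat_index k t))) (snd (concat_index k t))).
  assert (Hw : forall t, H (S (fst (concat_index k t))) (w t))
    by (intros t; apply Hkp, concat_index_offset_le).
  destruct (loop_erasure w) as [r [Hr Hrw]].
  - intros t. unfold w; simpl. pose proof (concat_index_offset_le k t) as Hle.
    destruct (concat_index k t) as [n o]; simpl in *.
    destruct (o <? k n) eqn:Ho; simpl.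
    + left. apply Nat.ltb_lt in Ho. apply Hkp; auto.
    + right. replace o with (k n) by (apply Nat.ltb_ge in Ho; lia).
      destruct (Hkp n) as [_ [Hend _]]. destruct (Hkp (S n)) as [Hstart _].
      rewrite Hstart. exact Hend.
  - intros v. destruct (classic (exists j, H j v)) as [[j Hj]|Hno].
    + destruct (concat_index_reach k (S j)) as [t0 Ht0]. exists t0. intros t Ht Hv.
      pose proof (concat_index_mono k t0 t Ht) as Hmono. rewrite Ht0 in Hmono; simpl in Hmono.
      pose proof (Hw t) as Hwt. rewrite Hv in Hwt.
      assert (Hmeet : S (fst (concat_index k t)) <= j + 1) by (apply HH; eauto). lia.
    + exists 0. intros t _ Hv. apply Hno. rewrite <- Hv. eauto.
  - exists r. split; auto. intros n. destruct (Hrw n) as [t ->]. apply HNH; eauto.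
Qed.

(** * A necklace around every solid ray *)

Definition ray_segment (r : nat -> V) (a b : nat) : list V := map r (seq a (S (b - a))).

Lemma in_ray_segment r a b y : a <= b ->
  In y (ray_segment r a b) <-> exists m, a <= m <= b /\ r m = y.
Proof.
  intros Hab. unfold ray_segment. rewrite in_map_iff. split.
  - intros [m [Hm Hin]]. apply in_seq in Hin. exists m; split; auto; lia.
  - intros [m [Hm Hy]]. exists m; split; auto. apply in_seq; lia.
Qed.

Lemma ray_reach_in r (C : V -> Prop) a b : directed_ray E r ->
  (forall m, a <= m <= b -> C (r m)) -> a <= b -> reach_in C (r a) (r b).
Proof.
  intros [_ HE] HC Hab. induction Hab as [|b Hab IH]; [apply rt_refl|].
  apply (rt_trans _ _ _ (r b)); [apply IH; intros; apply HC; lia|].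
  apply rt_step. split; [apply HE|]. split; apply HC; lia.
Qed.

Section SolidRay.

Variable r : nat -> V.
Hypothesis r_solid : solid E r.

(* Stage [j] of the construction: the next bead starts at [r (start s)], must
   avoid [older] (the beads [H 0 .. H (j-2)]); [used] lists [H 0 .. H (j-1)]. *)
Record stage := Stage { start : nat; older : list V; used : list V }.

Definition tail_avoids (s : stage) : Prop :=
  exists K, strong_comp E (fun x => In x (older s)) K /\ forall m, start s <= m -> K (r m).

Definition bead_spec (s : stage) (c : nat * list V) : Prop :=
  start s < fst c /\
  (forall m, start s <= m <= fst c -> In (r m) (snd c)) /\
  strongly_connected E (fun z => In z (snd c)) /\
  (forall z, In z (snd c) -> ~ In z (older s)) /\
  (exists K, strong_comp E (fun x => In x (used s)) K /\ forall m, fst c <= m -> K (r m)).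

(* The bead is a segment of the ray, closed up by a walk back to its start inside
   the strong component of [D - older] containing the tail; it ends where the
   ray has entered its strong component of [D - used]. *)
Lemma bead_exists s : tail_avoids s -> exists c, bead_spec s c.
Proof.
  intros [K [HK HrK]]. set (a := start s) in *.
  destruct (proj2 r_solid (fun x => In x (used s))) as [K' [HK' [n Hn]]];
    [exists (used s); auto|].
  set (b := max n (S a)).
  assert (Ka : K (r a)) by (apply HrK; lia). assert (Kb : K (r b)) by (apply HrK; lia).
  destruct (walk_support K (r b) (r a) (proj1 (proj2 HK) _ _ Kb Ka) Ka)
    as [l [HlK [Hbl [Hal Hl]]]].
  set (B := fun z => In z (ray_segment r a b ++ l)).
  assert (Hseg : forall m, a <= m <= b -> B (r m)).
  { intros m Hm. apply in_or_app; left. apply in_ray_segment; [lia|eauto]. }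
  assert (Hray : forall m m', a <= m <= m' -> m' <= b -> reach_in B (r m) (r m')).
  { intros m m' Hm Hm'. apply ray_reach_in; [apply r_solid| |lia]. intros; apply Hseg; lia. }
  assert (Hwalk : forall z, In z l -> reach_in B (r b) z /\ reach_in B z (r a)).
  { assert (Hwiden : forall u v, reach_in (fun y => In y l) u v -> reach_in B u v)
      by (intros u v; apply reach_in_mono; intros y Hy; apply in_or_app; auto).
    intros z Hz. split; apply Hwiden, Hl; auto. }
  exists (b, ray_segment r a b ++ l). split; [simpl; lia|]. split; [exact Hseg|]. split; [|split].
  - apply (strongly_connected_of_hub _ (r a)); [apply Hseg; lia|].
    intros z Hz. apply in_app_or in Hz as [Hz|Hz].
    + apply in_ray_segment in Hz as [m [Hm <-]]; [|lia]. split; [apply Hray; lia|].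
      apply (rt_trans _ _ _ (r b)); [apply Hray; lia|]. apply Hwalk; auto.
    + split; [|apply Hwalk; auto].
      apply (rt_trans _ _ _ (r b)); [apply Hray; lia|]. apply Hwalk; auto.
  - intros z Hz. apply (proj1 HK). apply in_app_or in Hz as [Hz|Hz]; auto.
    apply in_ray_segment in Hz as [m [Hm <-]]; [|lia]. apply HrK; lia.
  - exists K'. split; auto. intros m Hm; apply Hn; simpl in Hm; lia.
Qed.

Variable bead : stage -> nat * list V.
Hypothesis bead_ok : forall s, tail_avoids s -> bead_spec s (bead s).
Variable a0 : nat.
Hypothesis a0_ok : tail_avoids (Stage a0 [] []).

Definition next_stage (s : stage) : stage :=
  Stage (fst (bead s)) (used s) (used s ++ snd (bead s)).

Definition stage_at (j : nat) : stage := Nat.iter j next_stage (Stage a0 [] []).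

Definition bead_at (j : nat) : V -> Prop := fun z => In z (snd (bead (stage_at j))).

Lemma stage_at_spec j : bead_spec (stage_at j) (bead (stage_at j)).
Proof.
  apply bead_ok. induction j as [|j IH]; auto.
  destruct (bead_ok _ IH) as [_ [_ [_ [_ HK]]]]. exact HK.
Qed.

Lemma start_lt j : start (stage_at j) < start (stage_at (S j)).
Proof. apply (stage_at_spec j). Qed.

Lemma bead_at_segment j m :
  start (stage_at j) <= m <= start (stage_at (S j)) -> bead_at j (r m).
Proof. apply (stage_at_spec j). Qed.

Lemma bead_at_used i d z : bead_at i z -> In z (used (stage_at (S i + d))).
Proof.
  intros Hz. induction d as [|d IH]; rewrite ?Nat.add_0_r, ?Nat.add_succ_r;
    simpl; apply in_or_app; auto.
Qed.

Lemma bead_at_far_disjoint i j z : i + 2 <= j -> bead_at i z -> bead_at j z -> False.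
Proof.
  intros Hij Hi Hj. destruct (stage_at_spec j) as [_ [_ [_ [Hfresh _]]]].
  apply (Hfresh z Hj). replace j with (S (S i + (j - S (S i)))) by lia.
  apply (bead_at_used i), Hi.
Qed.

Lemma beads_bead_at : beads DF bead_at.
Proof.
  assert (Hshared : forall j, bead_at j (r (start (stage_at (S j)))) /\
    bead_at (S j) (r (start (stage_at (S j))))).
  { intros j. pose proof (start_lt j). pose proof (start_lt (S j)).
    split; apply bead_at_segment; lia. }
  split; [intros n; split|intros i j; split].
  - exists (snd (bead (stage_at n))); auto.
  - apply connected_digraph_F, stage_at_spec.
  - intros [z [Hi Hj]]. split; apply NNPP; intros Hfar.
    + apply (bead_at_far_disjoint j i z); auto; lia.
    + apply (bead_at_far_disjoint i j z); auto; lia.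
  - intros Hij. destruct (lt_eq_lt_dec i j) as [[Hlt|<-]|Hlt].
    + replace j with (S i) by lia. eauto.
    + exists (r (start (stage_at (S i)))). split; apply Hshared.
    + replace i with (S j) by lia. exists (r (start (stage_at (S j)))). split; apply Hshared.
Qed.

Lemma start_ge j : a0 + j <= start (stage_at j).
Proof. induction j as [|j IH]; [simpl; lia|]. pose proof (start_lt j); lia. Qed.

Lemma ray_covered_by_beads m : a0 <= m -> exists j, bead_at j (r m).
Proof.
  intros Hm. assert (Hcover : forall j, m <= start (stage_at j) -> exists i, bead_at i (r m)).
  { induction j as [|j IH]; intros Hj.
    - exists 0. apply bead_at_segment. pose proof (start_lt 0). simpl in *; lia.
    - destruct (le_lt_dec m (start (stage_at j))) as [Hle|Hlt]; [apply IH; lia|].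
      exists j. apply bead_at_segment; lia. }
  apply (Hcover m). pose proof (start_ge m); lia.
Qed.

End SolidRay.

Lemma solid_ray_in_necklace r : solid E r ->
  exists N, necklace DF N /\ exists n0, forall m, n0 <= m -> N (r m).
Proof.
  intros Hr. destruct (proj2 Hr (fun _ => False)) as [K0 [HK0 [a0 Ha0]]]; [exists []; auto|].
  assert (Hbead : forall s, exists c, tail_avoids r s -> bead_spec r s c).
  { intros s. destruct (classic (tail_avoids r s)) as [Hs|Hs].
    - destruct (bead_exists r Hr s Hs) as [c Hc]; eauto.
    - exists (0, []); tauto. }
  destruct (choice _ Hbead) as [bead Hbead_ok].
  assert (Ha0_ok : tail_avoids r (Stage a0 [] [])).
  { exists K0. split; auto. }
  exists (fun z => exists j, bead_at bead a0 j z). split.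
  - apply (necklace_of_beads digraph_F_union), (beads_bead_at r); auto.
  - exists a0. apply (ray_covered_by_beads r); auto.
Qed.

(** * The correspondence of ends *)

Definition same_end (w : dend E) (w' : cend DF) : Prop :=
  forall X K, finite X -> (dK E X w K <-> cK DF X w' K).

Lemma same_end_of_ray_in_necklace (w : dend E) (w' : cend DF) r N :
  solid E r -> proj1_sig w = ray_class r ->
  necklace DF N -> proj1_sig w' = necklace_class DF N ->
  (exists n0, forall m, n0 <= m -> N (r m)) -> same_end w w'.
Proof.
  intros Hr Hw HN Hw' HrN X K HX.
  rewrite (dK_representative w r X K HX Hr Hw).
  rewrite (cK_representative digraph_F_union digraph_F_singleton w' N X K HX HN Hw').
  apply ray_in_necklace_comp_iff; auto. apply Hr.
Qed.

Lemma dend_same_end (w : dend E) : exists w', same_end w w'.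
Proof.
  destruct w as [c p]. pose proof p as [r [Hr Hc]].
  destruct (solid_ray_in_necklace r Hr) as [N [HN HrN]].
  exists (exist _ (necklace_class DF N) (ex_intro _ N (conj HN eq_refl))).
  apply (same_end_of_ray_in_necklace _ _ r N); auto.
Qed.

Lemma cend_same_end (w' : cend DF) : exists w, same_end w w'.
Proof.
  destruct w' as [c p]. pose proof p as [N [HN Hc]].
  destruct (necklace_contains_ray N HN) as [r [Hr HrN]].
  assert (HrN' : exists n0, forall m, n0 <= m -> N (r m)) by (exists 0; auto).
  assert (Hs : solid E r) by (apply (ray_in_necklace_solid r N); auto).
  exists (exist _ (ray_class r) (ex_intro _ r (conj Hs eq_refl))).
  apply (same_end_of_ray_in_necklace _ _ r N); auto.
Qed.

Lemma same_end_functional w w1 w2 : same_end w w1 -> same_end w w2 -> w1 = w2.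
Proof.
  intros H1 H2. apply (cend_eq digraph_F_union digraph_F_singleton). intros X HX.
  destruct (dK_exists w X HX) as [K HK]. exists K. split; [apply H1|apply H2]; auto.
Qed.

Lemma same_end_injective w1 w2 w : same_end w1 w -> same_end w2 w -> w1 = w2.
Proof.
  intros H1 H2. apply dend_eq. intros X HX.
  destruct (cK_exists digraph_F_union digraph_F_singleton w X HX) as [K HK].
  exists K. split; [apply H1|apply H2]; auto.
Qed.

End Digraph.

Theorem lemma4p5 (V : Type) (E : V -> V -> Prop) :
  homeomorphic (dend_subbase E) (cend_subbase (digraph_F E)).
Proof.
  apply (homeomorphic_of_correspondence _ _ (same_end V E)).
  - apply dend_same_end.
  - apply cend_same_end.
  - apply same_end_functional.
  - apply same_end_injective.
  - intros U [A [K [HA [HK ->]]]]. exists (fun w' => cK (digraph_F E) A w' K). split.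
    + exists A, K. split; [auto|split; [apply strong_comp_is_comp; auto|reflexivity]].
    + intros w w' Hww'. apply Hww'; auto.
  - intros U [X [K [HX [HK ->]]]]. exists (fun w => dK E X w K). split.
    + exists X, K. split; [auto|split; [apply strong_comp_is_comp; auto|reflexivity]].
    + intros w w' Hww'. apply Hww'; auto.
Qed.
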